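(* Let $\mathcal{H}$ be a complex Hilbert space and $T\in\mathbb{B}(\mathcal{H})$. Then: (i) if $T$ is normal, then $w_{\Omega}(T) = \Omega(T)$; (ii) if $T^2 = 0$, then $w_{\Omega}(T)= \frac{\sqrt{2}}{2}\Omega(T)$.
   Context: $\mathbb{B}(\mathcal{H})$ is the algebra of bounded linear operators on $\mathcal{H}$ and $\|\cdot\|$ the usual operator norm. Dragomir's norm is $\Omega(T)=\sup\{\|\zeta T+\eta T^*\|:\ \zeta,\eta\in\mathbb{C},\ |\zeta|^2+|\eta|^2\le 1\}$. For $A\in\mathbb{B}(\mathcal{H})$, ${\rm Re}(A)=\frac{A+A^*}{2}$, and $w_\Omega(T)=\sup_{\theta\in\mathbb{R}}\Omega\big({\rm Re}(e^{i\theta}T)\big)$. *)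

From HB Require Import structures.
From mathcomp Require Import all_boot all_order all_algebra.
From mathcomp Require Import complex.
From mathcomp Require Import classical_sets reals trigo.

Set Implicit Arguments.
Unset Strict Implicit.
Unset Printing Implicit Defensive.

Import Order.TTheory GRing.Theory Num.Theory.
Local Open Scope ring_scope.
Local Open Scope classical_set_scope.

Section Hilbert.
Variable R : realType.
Local Notation C := (complex R).
Variable H : lmodType C.
Variable inner : H -> H -> C.

Definition is_inner_product : Prop :=
  [/\ forall (a : C) (x y z : H), inner (a *: x + y) z = a * inner x z + inner y z,
      forall x y : H, inner y x = conjc (inner x y),
      forall x : H, 0 <= inner x x
    & forall x : H, inner x x = 0 -> x = 0].

Definition hnorm (x : H) : R := Num.sqrt (complex.Re (inner x x)).

Definition is_complete : Prop :=
  forall u : nat -> H,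
    (forall e : R, 0 < e -> exists N : nat, forall m n : nat,
        (N <= m)%N -> (N <= n)%N -> hnorm (u m - u n) < e) ->
    exists l : H, forall e : R, 0 < e -> exists N : nat, forall n : nat,
        (N <= n)%N -> hnorm (u n - l) < e.

Definition is_hilbert : Prop := is_inner_product /\ is_complete.

Definition bounded_linear (T : H -> H) : Prop :=
  (forall (a : C) (x y : H), T (a *: x + y) = a *: T x + T y) /\
  (exists M : R, forall x : H, hnorm (T x) <= M * hnorm x).

Definition is_adjoint (T S : H -> H) : Prop :=
  forall x y : H, inner (T x) y = inner x (S y).

Definition opnorm (T : H -> H) : R :=
  sup [set hnorm (T x) | x in [set x : H | hnorm x <= 1]].

(* Dragomir's norm Omega(T) = sup { ||z T + w T^*|| : |z|^2 + |w|^2 <= 1 },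
   where Ts is the adjoint of T *)
Definition Omega (T Ts : H -> H) : R :=
  sup [set opnorm (fun x => zw.1 *: T x + zw.2 *: Ts x)
      | zw in [set zw : C * C | `|zw.1| ^+ 2 + `|zw.2| ^+ 2 <= 1]].

Definition expi (t : R) : C := Complex (cos t) (sin t).

(* Re(A) = (A + A^* )/2 with A = e^{i theta} T, so A^* = e^{-i theta} T^* *)
Definition ReOp (t : R) (T Ts : H -> H) : H -> H :=
  fun x => (2%:R)^-1 *: (expi t *: T x + conjc (expi t) *: Ts x).

(* w_Omega(T) = sup_theta Omega(Re(e^{i theta} T)); Re(.) is self-adjoint *)
Definition wOmega (T Ts : H -> H) : R :=
  sup [set Omega (ReOp t T Ts) (ReOp t T Ts) | t in [set: R]].

End Hilbert.

(* Write S_t = Re(e^{it} T) and w(T) = sup_t ||S_t|| for the numerical radius. For a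
   self-adjoint S, Omega(S) = sqrt 2 ||S||, and every zeta S_t + eta S_t is an admissible
   combination of T and T^*, so w_Omega(T) = sqrt 2 w(T) <= Omega(T).
   If T is normal then ||T^* x|| = ||T x||, hence Omega(T) <= sqrt 2 ||T||, and ||T|| <= w(T)
   by the spectral-radius argument: for normal X, w(X^2) <= w(X)^2 and ||X x||^2 <= ||X^2 x|| ||x||,
   while ||X|| <= 2 w(X) for every X; applied to X = T^(2^k) this gives
   ||T||^(2^k) <= 2 w(T)^(2^k) for all k.
   If T^2 = 0 then T T^* x lies in ker T, which yields ||T x||^2 + ||T^* x||^2 <= ||T||^2 ||x||^2;
   hence Omega(T) = ||T||, and ||S_t x||^2 = (||T x||^2 + ||T^* x||^2) / 4 gives
   ||S_t|| = ||T|| / 2 for every t. *)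

From HB Require Import structures.
From mathcomp Require Import all_boot all_order all_algebra.
From mathcomp Require Import complex.
From mathcomp Require Import classical_sets reals trigo.
From mathcomp Require Import ring lra.
Import Order.TTheory GRing.Theory Num.Theory.
Local Open Scope ring_scope.
Local Open Scope complex_scope.

Section ComplexScalars.
Context {R : rcfType}.
Implicit Types (a b : R[i]) (t : R).

Definition normc2 a : R := complex.Re a ^+ 2 + complex.Im a ^+ 2.

Lemma normc2E a : `|a| ^+ 2 = (normc2 a)%:C.
Proof. by rewrite /normc2 add_Re2_Im2. Qed.

Lemma normc2_ge0 a : 0 <= normc2 a.
Proof. by rewrite addr_ge0 ?sqr_ge0. Qed.

Lemma normc2M a b : normc2 (a * b) = normc2 a * normc2 b.
Proof. by case: a b => [a1 a2] [b1 b2]; rewrite /normc2 /=; ring. Qed.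

Lemma normc2J a : normc2 (conjc a) = normc2 a.
Proof. by case: a => a1 a2; rewrite /normc2 /= sqrrN. Qed.

Lemma normc2N a : normc2 (- a) = normc2 a.
Proof. by case: a => a1 a2; rewrite /normc2 /= !sqrrN. Qed.

Lemma normc2_real t : normc2 t%:C = t ^+ 2.
Proof. by rewrite /normc2 /= expr0n addr0. Qed.

Lemma normc2D_le a b : normc2 (a + b) <= 2 * (normc2 a + normc2 b).
Proof.
case: a b => [a1 a2] [b1 b2]; rewrite /normc2 /=.
have := sqr_ge0 (a1 - b1); have := sqr_ge0 (a2 - b2); nra.
Qed.

Lemma invc2 : (2%:R^-1 : R[i]) = (2^-1)%:C.
Proof. by rewrite fmorphV rmorph_nat. Qed.

Lemma normc2_half : normc2 (2%:R^-1) = 4^-1.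
Proof. by rewrite invc2 normc2_real; field. Qed.

Lemma normc2_ballE a b : (`|a| ^+ 2 + `|b| ^+ 2 <= 1) = (normc2 a + normc2 b <= 1).
Proof. by rewrite !normc2E -rmorphD; apply: (lecR _ 1). Qed.

Lemma ReJ a : complex.Re (conjc a) = complex.Re a.
Proof. by case: a. Qed.

End ComplexScalars.

Section Exponential.
Context {R : realType}.
Implicit Types s t : R.

Lemma normc2_expi t : normc2 (expi t) = 1.
Proof. by rewrite /normc2 /= cos2Dsin2. Qed.

Lemma expiD s t : expi (s + t) = expi s * expi t.
Proof. by rewrite /expi cosD sinD; congr Complex; ring. Qed.

Lemma expi0 : expi 0 = 1 :> R[i].
Proof. by rewrite /expi cos0 sin0. Qed.

Lemma expiDpi t : expi (t + pi) = - expi t.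
Proof. by rewrite /expi cosDpi sinDpi. Qed.

Lemma expi_half t : expi (t / 2) ^+ 2 = expi t.
Proof. by rewrite expr2 -expiD -splitr. Qed.

Lemma expiNpihalf : expi (- (pi / 2)) = - 'i :> R[i].
Proof. by rewrite /expi cosN sinN cos_pihalf sin_pihalf; congr Complex; rewrite oppr0. Qed.

End Exponential.

Section ExpTwoLimit.
Context {R : archiRealFieldType}.

Lemma ler_of_exp2n_le (a b c : R) : 0 <= a -> 0 <= b ->
  (forall k, a ^+ (2 ^ k) <= c * b ^+ (2 ^ k)) -> a <= b.
Proof.
move=> a0 b0 hc; rewrite leNgt; apply/negP => ba.
have [b_eq0|b_neq0] := eqVneq b 0.
  by have := hc 0%N; rewrite b_eq0 expn0 !expr1 mulr0 leNgt -b_eq0 ba.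
have b_gt0 : 0 < b by rewrite lt_def b_neq0.
set d := a / b - 1.
have d_gt0 : 0 < d by rewrite subr_gt0 ltr_pdivlMr // mul1r.
have bernoulli n : 1 + n%:R * d <= (1 + d) ^+ n.
  elim: n => [|n IHn]; first by rewrite mul0r addr0.
  have := mulr_ge0 (ler0n R n) (ltW d_gt0); rewrite exprS -natr1; nra.
have [k hk] : exists k, `|c| < k%:R * d.
  exists (Num.Def.archi_bound (`|c| / d)).
  by rewrite -ltr_pdivrMr // archi_boundP // divr_ge0 // ltW.
have kd : k%:R * d <= (2 ^ k)%:R * d by rewrite ler_pM2r // ler_nat ltnW // ltn_expl.
have := hc k; rewrite (_ : a = b * (1 + d)); last by rewrite /d; field.
rewrite exprMn [_ * (1 + d) ^+ _]mulrC ler_pM2r ?exprn_gt0 //.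
have := bernoulli (2 ^ k)%N; have := ler_norm c; lra.
Qed.

End ExpTwoLimit.

Section Hilbert.
Context {R : realType} {H : lmodType R[i]} (inner : H -> H -> R[i]).
Local Notation C := R[i].
Hypothesis inner_product : is_inner_product inner.
Implicit Types (a b : C) (t : R) (u v x y z : H) (X Y F G S : H -> H).

Lemma innerDZl a x y z : inner (a *: x + y) z = a * inner x z + inner y z.
Proof. by case: inner_product => h _ _ _; apply: h. Qed.

Lemma inner_conj x y : inner y x = conjc (inner x y).
Proof. by case: inner_product => _ h _ _; apply: h. Qed.

Lemma inner_self_ge0 x : 0 <= inner x x.
Proof. by case: inner_product => _ _ h _; apply: h. Qed.

Lemma inner_self_eq0 x : inner x x = 0 -> x = 0.
Proof. by case: inner_product => _ _ _ h; apply: h. Qed.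

Lemma inner0l z : inner 0 z = 0.
Proof.
have := innerDZl 1 0 0 z; rewrite scaler0 addr0 mul1r => h.
by apply: (addrI (inner 0 z)); rewrite addr0 -h.
Qed.

Lemma innerDl x y z : inner (x + y) z = inner x z + inner y z.
Proof. by rewrite -[x]scale1r innerDZl mul1r scale1r. Qed.

Lemma innerZl a x z : inner (a *: x) z = a * inner x z.
Proof. by rewrite -[a *: x]addr0 innerDZl inner0l addr0. Qed.

Lemma innerNl x z : inner (- x) z = - inner x z.
Proof. by rewrite -scaleN1r innerZl mulN1r. Qed.

Lemma inner0r z : inner z 0 = 0.
Proof. by rewrite inner_conj inner0l conjc0. Qed.

Lemma innerDr x y z : inner z (x + y) = inner z x + inner z y.
Proof. by rewrite inner_conj innerDl rmorphD /= -!inner_conj. Qed.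

Lemma innerZr a x z : inner z (a *: x) = conjc a * inner z x.
Proof. by rewrite inner_conj innerZl rmorphM /= -inner_conj. Qed.

Lemma innerNr x z : inner z (- x) = - inner z x.
Proof. by rewrite inner_conj innerNl rmorphN /= -inner_conj. Qed.

Lemma innerBr x y z : inner z (x - y) = inner z x - inner z y.
Proof. by rewrite innerDr innerNr. Qed.

Definition sqnorm x : R := complex.Re (inner x x).

Lemma inner_selfE x : inner x x = (sqnorm x)%:C.
Proof.
by have := ger0_Im (inner_self_ge0 x); rewrite /sqnorm; case: (inner x x) => ? ? /= ->.
Qed.

Lemma sqnorm_ge0 x : 0 <= sqnorm x.
Proof. by have := inner_self_ge0 x; rewrite inner_selfE lecR. Qed.

Lemma sqnorm_eq0 {x} : sqnorm x = 0 -> x = 0.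
Proof. by move=> x0; apply: inner_self_eq0; rewrite inner_selfE x0. Qed.

Lemma sqnorm0 : sqnorm 0 = 0.
Proof. by rewrite /sqnorm inner0l. Qed.

Lemma sqnorm_comb a b u v : sqnorm (a *: u + b *: v) =
  normc2 a * sqnorm u + normc2 b * sqnorm v
  + 2 * complex.Re (a * conjc b * inner u v).
Proof.
rewrite /sqnorm innerDl !innerDr !innerZl !innerZr (inner_conj u v) !inner_selfE.
by case: a b (inner u v) => [a1 a2] [b1 b2] [p q]; rewrite /normc2 /=; ring.
Qed.

Lemma sqnormZ a u : sqnorm (a *: u) = normc2 a * sqnorm u.
Proof. by rewrite /sqnorm innerZl innerZr inner_selfE; case: a => ? ?; rewrite /normc2 /=; ring. Qed.

Lemma sqnormD u v : sqnorm (u + v) = sqnorm u + sqnorm v + 2 * complex.Re (inner u v).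
Proof.
rewrite -[u]scale1r -[v]scale1r sqnorm_comb !scale1r conjc1 !mul1r.
by rewrite -(rmorph1 (real_complex R)) normc2_real expr1n !mul1r.
Qed.

Lemma sqnormB u v : sqnorm (u - v) = sqnorm u + sqnorm v - 2 * complex.Re (inner u v).
Proof.
rewrite sqnormD -scaleN1r sqnormZ innerZr normc2N.
rewrite -(rmorph1 (real_complex R)) normc2_real expr1n mul1r.
by case: (inner u v) => ? ? /=; ring.
Qed.

Lemma sqnormD_le u v : sqnorm (u + v) <= 2 * sqnorm u + 2 * sqnorm v.
Proof. by have := sqnorm_ge0 (u - v); rewrite sqnormB sqnormD; lra. Qed.

(* ||a u + b v||^2 + ||conj b u - conj a v||^2 = (|a|^2 + |b|^2) (||u||^2 + ||v||^2). *)
Lemma sqnorm_comb_le {a b} u v : normc2 a + normc2 b <= 1 ->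
  sqnorm (a *: u + b *: v) <= sqnorm u + sqnorm v.
Proof.
move=> ab1; have := sqnorm_ge0 (conjc b *: u + (- conjc a) *: v).
rewrite !sqnorm_comb !normc2J normc2N normc2J.
have -> : complex.Re (conjc b * conjc (- conjc a) * inner u v)
          = - complex.Re (a * conjc b * inner u v).
  by case: a b (inner u v) {ab1} => [a1 a2] [b1 b2] [p q] /=; ring.
have := normc2_ge0 a; have := normc2_ge0 b; have := sqnorm_ge0 u; have := sqnorm_ge0 v.
nra.
Qed.

Lemma Re_inner_sqr_le u v : complex.Re (inner u v) ^+ 2 <= sqnorm u * sqnorm v.
Proof.
set r := complex.Re (inner u v).
have [v0|v_neq0] := eqVneq (sqnorm v) 0.
  by rewrite /r (sqnorm_eq0 v0) inner0r sqnorm0 /= mulr0 expr0n.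
have v_gt0 : 0 < sqnorm v by rewrite lt_def v_neq0 sqnorm_ge0.
have := sqnorm_ge0 (u - (r / sqnorm v)%:C *: v).
rewrite sqnormB sqnormZ normc2_real innerZr conjc_real.
have -> : complex.Re ((r / sqnorm v)%:C * inner u v) = r / sqnorm v * r.
  by rewrite /r; case: (inner u v) => ? ? /=; ring.
have -> : sqnorm u + (r / sqnorm v) ^+ 2 * sqnorm v - 2 * (r / sqnorm v * r)
          = (sqnorm u * sqnorm v - r ^+ 2) / sqnorm v.
  by field.
by rewrite pmulr_lge0 ?invr_gt0 // subr_ge0.
Qed.

Lemma hnorm_sqr x : hnorm inner x ^+ 2 = sqnorm x.
Proof. by rewrite sqr_sqrtr // sqnorm_ge0. Qed.

Lemma hnorm_ge0 x : 0 <= hnorm inner x.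
Proof. exact: sqrtr_ge0. Qed.

Lemma hnorm0 : hnorm inner 0 = 0.
Proof. by rewrite /hnorm -/(sqnorm 0) sqnorm0 sqrtr0. Qed.

Lemma hnorm_le_sqnorm m y x : 0 <= m ->
  (hnorm inner y <= m * hnorm inner x) = (sqnorm y <= m ^+ 2 * sqnorm x).
Proof.
move=> m0; rewrite -(ler_pXn2r (n := 2)) ?nnegrE ?mulr_ge0 ?hnorm_ge0 //.
by rewrite exprMn !hnorm_sqr.
Qed.

Definition bounded_by F m := forall x, sqnorm (F x) <= m ^+ 2 * sqnorm x.

Definition bounded F := exists m, bounded_by F m.

Lemma bounded_byW F m m' : 0 <= m -> m <= m' -> bounded_by F m -> bounded_by F m'.
Proof.
move=> m0 mm' hF x; apply: le_trans (hF x) _; rewrite ler_wpM2r ?sqnorm_ge0 //.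
by rewrite ler_pXn2r ?nnegrE // (le_trans m0).
Qed.

Lemma hnorm_le_opnorm {F} x : bounded F -> hnorm inner x <= 1 ->
  hnorm inner (F x) <= opnorm inner F.
Proof.
move=> [m hF] x1; apply: ub_le_sup; last by exists x.
exists `|m| => _ [y y1 <-]; apply: le_trans (_ : `|m| * hnorm inner y <= _).
  by rewrite hnorm_le_sqnorm // real_normK ?num_real.
by rewrite -[leRHS]mulr1 ler_wpM2l.
Qed.

Lemma opnorm_ge0 {F} : bounded F -> 0 <= opnorm inner F.
Proof.
move=> hF; apply: le_trans (hnorm_ge0 (F 0)) (hnorm_le_opnorm 0 hF _).
by rewrite hnorm0 ler01.
Qed.

Lemma opnorm_le F m : 0 <= m -> bounded_by F m -> opnorm inner F <= m.
Proof.
move=> m0 hF; apply: ge_sup; first by exists (hnorm inner (F 0)), 0; rewrite /= ?hnorm0.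
move=> _ [x x1 <-]; apply: le_trans (_ : m * hnorm inner x <= _).
  by rewrite hnorm_le_sqnorm.
by rewrite -[leRHS]mulr1 ler_wpM2l.
Qed.

Section LinearOperator.
Context {F : H -> H}.
Hypothesis linF : linear F.
HB.instance Definition _ := GRing.isLinear.Build C H H *:%R F linF.

Lemma bounded_by_opnorm : bounded F -> bounded_by F (opnorm inner F).
Proof.
move=> hF x; have [->|x_neq0] := eqVneq x 0; first by rewrite linear0 sqnorm0 mulr0.
have hx_gt0 : 0 < hnorm inner x.
  rewrite sqrtr_gt0 lt_def sqnorm_ge0 andbT.
  by apply: contra x_neq0 => /eqP/sqnorm_eq0 ->.
pose c := (hnorm inner x)^-1.
have c_gt0 : 0 < normc2 c%:C by rewrite normc2_real exprn_gt0 // invr_gt0.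
have y1 : hnorm inner (c%:C *: x) = 1.
  rewrite /hnorm -/(sqnorm _) sqnormZ normc2_real -hnorm_sqr -exprMn.
  by rewrite mulVf ?gt_eqF // expr1n sqrtr1.
have h1 : hnorm inner (F (c%:C *: x)) <= opnorm inner F * hnorm inner (c%:C *: x).
  by rewrite y1 mulr1 hnorm_le_opnorm // y1.
move: h1; rewrite hnorm_le_sqnorm ?opnorm_ge0 // linearZ !sqnormZ mulrCA.
by rewrite ler_pM2l.
Qed.

End LinearOperator.

Lemma opnorm_le_scale {G F c} : linear F -> bounded F -> 0 <= c ->
  (forall x, sqnorm (G x) <= c ^+ 2 * sqnorm (F x)) ->
  opnorm inner G <= c * opnorm inner F.
Proof.
move=> linF hF c0 hGF; apply: opnorm_le => [|x]; first by rewrite mulr_ge0 ?opnorm_ge0.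
apply: le_trans (hGF x) _; rewrite exprMn -[leRHS]mulrA.
by apply: ler_wpM2l; [exact: exprn_ge0 | exact: bounded_by_opnorm].
Qed.

Lemma linear_comp {X Y} : linear X -> linear Y -> linear (X \o Y).
Proof. by move=> linX linY a u v /=; rewrite linY linX. Qed.

Lemma adjoint_sym {X Y} : is_adjoint inner X Y -> is_adjoint inner Y X.
Proof. by move=> XY x y; rewrite inner_conj -XY -inner_conj. Qed.

Lemma adjoint_comp {X Y X' Y'} : is_adjoint inner X Y -> is_adjoint inner X' Y' ->
  is_adjoint inner (X \o X') (Y' \o Y).
Proof. by move=> XY XY' x y /=; rewrite XY XY'. Qed.

Lemma adjoint_linear {X Y} : is_adjoint inner X Y -> linear Y.
Proof.
move=> XY a x y; apply/eqP; rewrite -subr_eq0; apply/eqP/inner_self_eq0.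
by rewrite innerBr -XY !innerDr !innerZr -!XY subrr.
Qed.

Lemma adjoint_bounded {X Y} : is_adjoint inner X Y -> bounded X -> bounded Y.
Proof.
move=> XY [m hX]; exists m => x.
have := Re_inner_sqr_le (X (Y x)) x; rewrite XY -/(sqnorm (Y x)) expr2 => hs.
have [s0|s_neq0] := eqVneq (sqnorm (Y x)) 0.
  by rewrite s0 mulr_ge0 ?sqr_ge0 ?sqnorm_ge0.
rewrite -(ler_pM2l (_ : 0 < sqnorm (Y x))); last by rewrite lt_def s_neq0 sqnorm_ge0.
apply: le_trans hs _; rewrite mulrA [sqnorm (Y x) * _]mulrC.
by rewrite ler_wpM2r ?sqnorm_ge0.
Qed.

Definition comb a b X Y := fun x => a *: X x + b *: Y x.

Lemma comb_linear {a b X Y} : linear X -> linear Y -> linear (comb a b X Y).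
Proof.
move=> linX linY c x y; rewrite /comb linX linY !scalerDr !scalerA.
by rewrite [a * c]mulrC [b * c]mulrC -!scalerA addrACA.
Qed.

Lemma comb_bounded_by a b X Y m m' : normc2 a + normc2 b <= 1 ->
  bounded_by X m -> bounded_by Y m' ->
  bounded_by (comb a b X Y) (Num.sqrt (m ^+ 2 + m' ^+ 2)).
Proof.
move=> ab1 hX hY x; rewrite sqr_sqrtr ?addr_ge0 ?sqr_ge0 // mulrDl.
by apply: le_trans (sqnorm_comb_le _ _ ab1) _; apply: lerD.
Qed.

Lemma comb_bounded {a b X Y} : normc2 a + normc2 b <= 1 ->
  bounded X -> bounded Y -> bounded (comb a b X Y).
Proof. by move=> ab1 [m hX] [m' hY]; eexists; apply: comb_bounded_by hY. Qed.

Lemma opnorm_le_Omega {a b X Y} : bounded X -> bounded Y -> normc2 a + normc2 b <= 1 ->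
  opnorm inner (comb a b X Y) <= Omega inner X Y.
Proof.
move=> [m hX] [m' hY] ab1; apply: ub_le_sup; last by exists (a, b); rewrite /= ?normc2_ballE.
exists (Num.sqrt (m ^+ 2 + m' ^+ 2)) => _ [[c d] /= cd1 <-].
by apply: opnorm_le; [exact: sqrtr_ge0 | apply: comb_bounded_by; rewrite -?normc2_ballE].
Qed.

Lemma Omega_ge0 {X Y} : bounded X -> bounded Y -> 0 <= Omega inner X Y.
Proof.
have ball0 : normc2 0 + normc2 0 <= 1 :> R by rewrite /normc2 /= expr0n !addr0 ler01.
move=> hX hY; apply: le_trans (opnorm_le_Omega hX hY ball0).
exact/opnorm_ge0/comb_bounded.
Qed.

Lemma Omega_le {X Y m} : 0 <= m ->
  (forall a b, normc2 a + normc2 b <= 1 -> bounded_by (comb a b X Y) m) ->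
  Omega inner X Y <= m.
Proof.
move=> m0 hm; apply: ge_sup.
  exists (opnorm inner (comb 0 0 X Y)), (0, 0) => //=.
  by rewrite normr0 expr0n addr0 ler01.
by move=> _ [[a b] /= ab1 <-]; apply: opnorm_le => //; apply: hm; rewrite -normc2_ballE.
Qed.

Lemma Omega_self S : linear S -> bounded S ->
  Omega inner S S = Num.sqrt 2 * opnorm inner S.
Proof.
move=> linS hS; set N := opnorm inner S; set s := Num.sqrt (2 : R).
have N0 : 0 <= N := opnorm_ge0 hS.
have hN : bounded_by S N := bounded_by_opnorm linS hS.
have s_gt0 : 0 < s by rewrite sqrtr_gt0.
have s2 : s ^+ 2 = 2 by rewrite sqr_sqrtr.
have combE a b x : comb a b S S x = (a + b) *: S x by rewrite /comb scalerDl.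
apply/eqP; rewrite eq_le; apply/andP; split.
  apply: Omega_le => [|a b ab1 x]; first by rewrite mulr_ge0 // ltW.
  rewrite combE sqnormZ exprMn s2.
  have ab2 : normc2 (a + b) <= 2 by have := normc2D_le a b; lra.
  have := hN x; have := sqnorm_ge0 (S x); nra.
pose c := s^-1%:C.
have c2 : s^-1 ^+ 2 = 2^-1 by rewrite exprVn s2.
have cc1 : normc2 c + normc2 c <= 1 by rewrite normc2_real c2; lra.
apply: le_trans (opnorm_le_Omega hS hS cc1).
rewrite -[leRHS](mulVKf (lt0r_neq0 s_gt0)) ler_pM2l //.
apply: opnorm_le_scale; [exact: comb_linear | exact: comb_bounded | by rewrite invr_ge0 ltW |].
move=> x; rewrite combE sqnormZ -rmorphD normc2_real.
have -> : (s^-1 + s^-1) ^+ 2 = 4 * s^-1 ^+ 2 by ring.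
by rewrite c2; have := sqnorm_ge0 (S x); lra.
Qed.

Lemma wOmega_le {X Y m} :
  (forall t, Omega inner (ReOp t X Y) (ReOp t X Y) <= m) -> wOmega inner X Y <= m.
Proof.
move=> hm; apply: ge_sup; first by exists (Omega inner (ReOp 0 X Y) (ReOp 0 X Y)), 0.
by move=> _ [t _ <-].
Qed.

Lemma ReOpE t X Y x : ReOp t X Y x = comb (expi t / 2) (conjc (expi t) / 2) X Y x.
Proof. by rewrite /ReOp /comb scalerDr !scalerA ![2^-1 * _]mulrC. Qed.

Lemma ReOp_linear t {X Y} : linear X -> linear Y -> linear (ReOp t X Y).
Proof. by move=> linX linY a u v; rewrite !ReOpE; apply: comb_linear. Qed.

Lemma ReOp_ball t : normc2 (expi t / 2) + normc2 (conjc (expi t) / 2) <= 1.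
Proof. by rewrite !normc2M normc2J normc2_expi normc2_half; lra. Qed.

Lemma ReOp_bounded t {X Y} : bounded X -> bounded Y -> bounded (ReOp t X Y).
Proof.
move=> hX hY; have [m hm] := comb_bounded (ReOp_ball t) hX hY.
by exists m => x; rewrite ReOpE.
Qed.

Lemma ReOp_selfadjoint t {X Y} :
  is_adjoint inner X Y -> is_adjoint inner (ReOp t X Y) (ReOp t X Y).
Proof.
move=> XY x y; rewrite /ReOp innerZl innerZr innerDl innerDr !innerZl !innerZr.
by rewrite XY (adjoint_sym XY) conjcK conjc_inv conjc_nat addrC.
Qed.

(* [numrad_le X Y m]: the numerical radius of X, in the form sup_t ||Re(e^{it} X)||, is at most m. *)
Definition numrad_le X Y m := forall t, bounded_by (ReOp t X Y) m.

Lemma sqnorm_le_numrad X Y m x :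
  numrad_le X Y m -> sqnorm (X x) <= 4 * (m ^+ 2 * sqnorm x).
Proof.
move=> hm.
have -> : X x = ReOp 0 X Y x + 'i *: ReOp (- (pi / 2)) X Y x.
  have coefs a b : a = 1 -> b = 0 -> X x = a *: X x + b *: Y x.
    by move=> -> ->; rewrite scale1r scale0r addr0.
  rewrite /ReOp expi0 expiNpihalf conjc1 !scalerDr !scalerA addrACA -!scalerDl invc2.
  by apply: coefs; apply/eqP; rewrite eq_complex /=; apply/andP; split; apply/eqP; field.
apply: le_trans (sqnormD_le _ _) _; rewrite (sqnormZ 'i) (_ : normc2 'i = 1).
  by have := hm 0 x; have := hm (- (pi / 2)) x; lra.
by rewrite /normc2 /= expr0n expr1n add0r.
Qed.

Section SelfAdjointOperator.
Context {S : H -> H}.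
Hypotheses (linS : linear S) (adjS : is_adjoint inner S S).
HB.instance Definition _ := GRing.isLinear.Build C H H *:%R S linS.

Lemma Re_inner_polar x y : 4 * complex.Re (inner (S x) y) =
  complex.Re (inner (S (x + y)) (x + y)) - complex.Re (inner (S (x - y)) (x - y)).
Proof.
rewrite linearD linearB !innerDl !innerNl !innerDr !innerNr (adjS y x).
rewrite (inner_conj (S x) y).
case: (inner (S x) y) (inner (S x) x) (inner (S y) y) => [p q] [p' q'] [p'' q''] /=.
ring.
Qed.

(* Polarization bounds 4 Re <S x, y> by 2 m (||x||^2 + ||y||^2); then take y = S x / m. *)
Lemma selfadjoint_bounded_by m : 0 <= m ->
  (forall y, `|complex.Re (inner (S y) y)| <= m * sqnorm y) -> bounded_by S m.
Proof.
move=> m0 hm x.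
have polar y : 4 * complex.Re (inner (S x) y) <= 2 * m * (sqnorm x + sqnorm y).
  rewrite Re_inner_polar.
  have := hm (x + y); have := hm (x - y); rewrite sqnormB sqnormD !ler_norml.
  by move=> /andP[h2 _] /andP[_ h1]; lra.
have quad r : 4 * r * sqnorm (S x) <= 2 * m * (sqnorm x + r ^+ 2 * sqnorm (S x)).
  have := polar (r%:C *: S x).
  by rewrite innerZr conjc_real sqnormZ normc2_real inner_selfE -rmorphM /= mulrA.
have SX0 := sqnorm_ge0 (S x); have X0 := sqnorm_ge0 x.
have [m_eq0|m_neq0] := eqVneq m 0.
  by have := quad 1; rewrite m_eq0 expr0n /= !mul0r mulr0; lra.
have m_gt0 : 0 < m by rewrite lt_def m_neq0.
have := quad m^-1; rewrite -(ler_pM2l m_gt0).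
have -> : m * (4 * m^-1 * sqnorm (S x)) = 4 * sqnorm (S x) by field.
have -> : m * (2 * m * (sqnorm x + m^-1 ^+ 2 * sqnorm (S x)))
          = 2 * (m ^+ 2 * sqnorm x) + 2 * sqnorm (S x) by field.
lra.
Qed.

End SelfAdjointOperator.

Section NormalOperator.
Context {X Y : H -> H}.
Hypotheses (XY : is_adjoint inner X Y) (XYC : forall x, X (Y x) = Y (X x)).

Lemma sqnorm_adjoint_normal x : sqnorm (Y x) = sqnorm (X x).
Proof. by rewrite /sqnorm (adjoint_sym XY) XYC -XY. Qed.

Lemma sqnorm_ReOp_normal t x : sqnorm (ReOp t X Y x) =
  (sqnorm (X x) + complex.Re (expi t ^+ 2 * inner (X (X x)) x)) / 2.
Proof.
rewrite /ReOp sqnormZ normc2_half sqnorm_comb normc2J normc2_expi conjcK.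
by rewrite sqnorm_adjoint_normal -XY expr2; lra.
Qed.

Lemma Re_expi_inner_sqr_le t x : complex.Re (expi t * inner (X (X x)) x) <= sqnorm (X x).
Proof.
rewrite XY -innerZl; have := Re_inner_sqr_le (expi t *: X x) (Y x).
rewrite sqnormZ normc2_expi mul1r sqnorm_adjoint_normal.
by have := sqnorm_ge0 (X x); nra.
Qed.

Lemma sqnorm_sqr_normal_le x : sqnorm (X x) ^+ 2 <= sqnorm (X (X x)) * sqnorm x.
Proof.
have := Re_inner_sqr_le (Y (X x)) x.
by rewrite (adjoint_sym XY) -/(sqnorm (X x)) sqnorm_adjoint_normal.
Qed.

(* Re (e^{it} <X^2 y, y>) <= ||Re(e^{it/2} X) y||^2 by [sqnorm_ReOp_normal] and
   [Re_expi_inner_sqr_le], and Re(e^{it} X^2) is self-adjoint. *)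
Lemma numrad_le_sqr m : linear X -> numrad_le X Y m -> numrad_le (X \o X) (Y \o Y) (m ^+ 2).
Proof.
move=> linX hm t; have linY := adjoint_linear XY.
have ReXX s y : complex.Re (expi s * inner (X (X y)) y) <= m ^+ 2 * sqnorm y.
  have := hm (s / 2) y; rewrite sqnorm_ReOp_normal expi_half.
  by have := Re_expi_inner_sqr_le s y; lra.
apply: (selfadjoint_bounded_by (ReOp_linear _ (linear_comp linX linX) (linear_comp linY linY))
          (ReOp_selfadjoint _ (adjoint_comp XY XY))) => [|y]; first exact: sqr_ge0.
have -> : complex.Re (inner (ReOp t (X \o X) (Y \o Y) y) y)
          = complex.Re (expi t * inner (X (X y)) y).
  rewrite /ReOp innerZl innerDl !innerZl /= (adjoint_sym XY) (adjoint_sym XY).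
  rewrite (inner_conj (X (X y))) invc2 /expi.
  by case: (inner (X (X y)) y) => p q /=; field.
rewrite ler_norml ReXX andbT lerNl.
by rewrite -raddfN -mulNr -expiDpi ReXX.
Qed.

End NormalOperator.

(* ||X x||^2 <= ||X^2 x|| ||x|| for normal X, and ||X^(2^k)|| <= 2 w(X^(2^k)) <= 2 w(X)^(2^k). *)
Lemma normal_sqnorm_exp2n_le k X Y m x : linear X -> is_adjoint inner X Y ->
  (forall x, X (Y x) = Y (X x)) -> numrad_le X Y m ->
  sqnorm (X x) ^+ (2 ^ k) <= 4 * (m ^+ 2 * sqnorm x) ^+ (2 ^ k).
Proof.
elim: k X Y m => [|k IHk] X Y m linX XY XYC hm.
  by rewrite expn0 !expr1; apply: sqnorm_le_numrad hm.
have XXC y : (X \o X) ((Y \o Y) y) = (Y \o Y) ((X \o X) y) by rewrite /= !XYC.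
have := IHk _ _ _ (linear_comp linX linX) (adjoint_comp XY XY) XXC (numrad_le_sqr XY XYC m linX hm).
move=> /= IH; rewrite expnS !exprM.
apply: le_trans (_ : (sqnorm (X (X x)) * sqnorm x) ^+ (2 ^ k) <= _).
  apply: lerXn2r; rewrite ?nnegrE ?sqr_ge0 ?mulr_ge0 ?sqnorm_ge0 //.
  exact: sqnorm_sqr_normal_le.
rewrite exprMn; apply: le_trans (ler_wpM2r (exprn_ge0 _ (sqnorm_ge0 x)) IH) _.
rewrite -mulrA -exprMn.
by rewrite (_ : (m ^+ 2) ^+ 2 * sqnorm x * sqnorm x = (m ^+ 2 * sqnorm x) ^+ 2) //; ring.
Qed.

Lemma normal_bounded_by_numrad {X Y m} : linear X -> is_adjoint inner X Y ->
  (forall x, X (Y x) = Y (X x)) -> numrad_le X Y m -> bounded_by X m.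
Proof.
move=> linX XY XYC hm x.
apply: (@ler_of_exp2n_le _ _ _ 4 (sqnorm_ge0 _) (mulr_ge0 (sqr_ge0 m) (sqnorm_ge0 x))) => k.
exact: normal_sqnorm_exp2n_le.
Qed.

Section NilpotentOperator.
Context {X Y : H -> H}.
Hypotheses (linX : linear X) (XY : is_adjoint inner X Y) (XX0 : forall x, X (X x) = 0).

Lemma sqnorm_ReOp_nil t x : sqnorm (ReOp t X Y x) = (sqnorm (X x) + sqnorm (Y x)) / 4.
Proof.
rewrite /ReOp sqnormZ normc2_half sqnorm_comb normc2J normc2_expi -XY XX0 inner0l.
by rewrite mulr0 /=; lra.
Qed.

(* X x = X (x - r X Y x) for every real r, since X^2 = 0; take r = 1 / m^2. *)
Lemma sqnorm_add_adjoint_nil_le m x : 0 <= m -> bounded_by X m ->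
  sqnorm (X x) + sqnorm (Y x) <= m ^+ 2 * sqnorm x.
Proof.
move=> m0 hX; set v := X (Y x).
have Re_vx : complex.Re (inner v x) = sqnorm (Y x) by rewrite /v XY.
have Re_xv : complex.Re (inner x v) = sqnorm (Y x) by rewrite inner_conj ReJ.
have quad r : sqnorm (X x) <= m ^+ 2 * (sqnorm x + r ^+ 2 * sqnorm v - 2 * r * sqnorm (Y x)).
  have -> : X x = X (x - r%:C *: v) by rewrite addrC -scaleNr linX /v XX0 scaler0 add0r.
  apply: le_trans (hX _) _; rewrite sqnormB sqnormZ normc2_real innerZr conjc_real.
  rewrite (_ : complex.Re (r%:C * inner x v) = r * sqnorm (Y x)) ?mulrA //.
  by rewrite -Re_xv; case: (inner x v) => ? ? /=; ring.
have hv : sqnorm v <= m ^+ 2 * sqnorm (Y x) := hX (Y x).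
have X0 := sqnorm_ge0 x; have Y0 := sqnorm_ge0 (Y x); have v0 := sqnorm_ge0 v.
have [m_eq0|m_neq0] := eqVneq m 0.
  move: hv (quad 0); rewrite m_eq0 expr0n /= !mul0r => hv hXx.
  have := Re_inner_sqr_le v x; rewrite Re_vx (_ : sqnorm v = 0) ?mul0r; first by nra.
  by apply/eqP; rewrite eq_le hv v0.
have := quad (m ^+ 2)^-1.
have -> : m ^+ 2 * (sqnorm x + (m ^+ 2)^-1 ^+ 2 * sqnorm v - 2 * (m ^+ 2)^-1 * sqnorm (Y x))
          = m ^+ 2 * sqnorm x + (m ^+ 2)^-1 * sqnorm v - 2 * sqnorm (Y x).
  by field.
have : (m ^+ 2)^-1 * sqnorm v <= sqnorm (Y x).
  by rewrite ler_pdivrMl ?exprn_gt0 ?lt_def ?m_neq0.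
lra.
Qed.

End NilpotentOperator.

Section Corollary.
Context {T Ts : H -> H}.
Hypotheses (linT : linear T) (hT : bounded T) (TTs : is_adjoint inner T Ts).
Let linTs : linear Ts := adjoint_linear TTs.
Let hTs : bounded Ts := adjoint_bounded TTs hT.

Lemma Omega_ReOp t :
  Omega inner (ReOp t T Ts) (ReOp t T Ts) = Num.sqrt 2 * opnorm inner (ReOp t T Ts).
Proof. exact: Omega_self (ReOp_linear t linT linTs) (ReOp_bounded t hT hTs). Qed.

Lemma Omega_ReOp_le t : Omega inner (ReOp t T Ts) (ReOp t T Ts) <= Omega inner T Ts.
Proof.
apply: Omega_le (Omega_ge0 hT hTs) _ => a b ab1 x.
pose a' := (a + b) * (expi t / 2); pose b' := (a + b) * (conjc (expi t) / 2).
have ab1' : normc2 a' + normc2 b' <= 1.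
  by rewrite !normc2M normc2J normc2_expi normc2_half; have := normc2D_le a b; lra.
have -> : comb a b (ReOp t T Ts) (ReOp t T Ts) x = comb a' b' T Ts x.
  by rewrite /comb !ReOpE /comb -scalerDl scalerDr !scalerA.
have hab := comb_bounded ab1' hT hTs.
apply: bounded_byW (opnorm_ge0 hab) (opnorm_le_Omega hT hTs ab1') _ x.
exact: bounded_by_opnorm (comb_linear linT linTs) hab.
Qed.

Lemma Omega_ReOp_le_wOmega t : Omega inner (ReOp t T Ts) (ReOp t T Ts) <= wOmega inner T Ts.
Proof.
apply: ub_le_sup; last by exists t.
by exists (Omega inner T Ts) => _ [s _ <-]; apply: Omega_ReOp_le.
Qed.

Lemma wOmega_le_Omega : wOmega inner T Ts <= Omega inner T Ts.
Proof. exact: wOmega_le Omega_ReOp_le. Qed.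

Lemma Omega_le_wOmega_normal : (forall x, T (Ts x) = Ts (T x)) ->
  Omega inner T Ts <= wOmega inner T Ts.
Proof.
move=> TTsC; set W := wOmega inner T Ts; set s := Num.sqrt (2 : R).
have s_gt0 : 0 < s by rewrite sqrtr_gt0.
have W0 : 0 <= W.
  apply: le_trans (Omega_ReOp_le_wOmega 0).
  by apply: Omega_ge0; apply: ReOp_bounded.
have hm : numrad_le T Ts (W / s).
  move=> t; have hSt := ReOp_bounded t hT hTs.
  apply: bounded_byW (opnorm_ge0 hSt) _ (bounded_by_opnorm (ReOp_linear t linT linTs) hSt).
  by rewrite ler_pdivlMr // mulrC -Omega_ReOp Omega_ReOp_le_wOmega.
have hTm := normal_bounded_by_numrad linT TTs TTsC hm.
apply: Omega_le W0 _ => a b ab1 x; apply: le_trans (sqnorm_comb_le _ _ ab1) _.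
rewrite (sqnorm_adjoint_normal TTs TTsC); have := hTm x.
by rewrite expr_div_n sqr_sqrtr ?ler0n //; lra.
Qed.

Lemma wOmega_nilpotent : (forall x, T (T x) = 0) ->
  wOmega inner T Ts = Num.sqrt 2 / 2 * Omega inner T Ts.
Proof.
move=> TT0; set N := opnorm inner T.
have N0 : 0 <= N := opnorm_ge0 hT.
have hsum x := sqnorm_add_adjoint_nil_le linT TTs TT0 N x N0 (bounded_by_opnorm linT hT).
have OmegaE : Omega inner T Ts = N.
  apply/eqP; rewrite eq_le; apply/andP; split.
    by apply: Omega_le => // a b ab1 x; apply: le_trans (sqnorm_comb_le _ _ ab1) (hsum x).
  have ball10 : normc2 1 + normc2 0 <= 1 :> R by rewrite /normc2 /= expr0n expr1n !addr0.
  apply: le_trans (opnorm_le_Omega hT hTs ball10); rewrite -[leRHS]mul1r.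
  apply: opnorm_le_scale (comb_linear linT linTs) (comb_bounded ball10 hT hTs) ler01 _ => x.
  by rewrite /comb scale1r scale0r addr0 expr1n mul1r.
have OmegaReOpE t : Omega inner (ReOp t T Ts) (ReOp t T Ts) = Num.sqrt 2 / 2 * N.
  have hSt := ReOp_bounded t hT hTs; rewrite Omega_ReOp.
  suff -> : opnorm inner (ReOp t T Ts) = N / 2 by ring.
  apply/eqP; rewrite eq_le; apply/andP; split.
    apply: opnorm_le => [|x]; first by rewrite divr_ge0.
    rewrite (sqnorm_ReOp_nil TTs TT0) (_ : (N / 2) ^+ 2 = N ^+ 2 / 4); last by field.
    by have := hsum x; lra.
  have : N <= 2 * opnorm inner (ReOp t T Ts).
    apply: opnorm_le_scale (ReOp_linear t linT linTs) hSt _ _ => // x.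
    by rewrite (sqnorm_ReOp_nil TTs TT0); have := sqnorm_ge0 (Ts x); lra.
  lra.
rewrite OmegaE; apply/eqP; rewrite eq_le; apply/andP; split.
  by apply: wOmega_le => t; rewrite OmegaReOpE.
by rewrite -(OmegaReOpE 0) Omega_ReOp_le_wOmega.
Qed.

End Corollary.

End Hilbert.

Theorem corollary3p6 (R : realType) (H : lmodType (complex R))
    (inner : H -> H -> complex R) (T Ts : H -> H) :
  is_hilbert inner ->
  bounded_linear inner T ->
  is_adjoint inner T Ts ->
  ((forall x : H, T (Ts x) = Ts (T x)) ->
     wOmega inner T Ts = Omega inner T Ts) /\
  ((forall x : H, T (T x) = 0) ->
     wOmega inner T Ts = Num.sqrt 2%:R / 2%:R * Omega inner T Ts).
Proof.
move=> [ip _] [linT [M hM]] TTs.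
have hT : bounded inner T.
  exists `|M| => x; rewrite -(hnorm_le_sqnorm _ ip) //; apply: le_trans (hM x) _.
  by rewrite ler_wpM2r ?hnorm_ge0 ?ler_norm.
split=> [TTsC|TT0]; last exact: wOmega_nilpotent.
by apply/eqP; rewrite eq_le wOmega_le_Omega // Omega_le_wOmega_normal.
Qed.
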